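(* Let $b$ be a block and $r$ a round. If in round $r$ there are $2f+1$ blocks from distinct validators that are certificates for $b$, then every (valid) block of every round $r'>r$ has a path to some round-$r$ certificate for $b$.
   Context: There are $n=3f+1$ validators, at most $f$ Byzantine. Blocks are organized in rounds; every valid block of round $r$ has as parents (hash references) at least $2f+1$ blocks of round $r-1$ from distinct validators (and possibly earlier blocks). There is a path from $b$ to $b'$ if $b'$ is reached from $b$ by repeatedly following parent references. A block $b$ of round $r'$ is a vote for a block $L$ of round $r<r'$ with author $a$ if the first block with author $a$ and round $r$ encountered in the deterministic depth-first search from $b$ along parent references is $L$. For a fixed wave length $w\ge 4$, a block $c$ of round $r+w-1$ is a certificate for a block $L$ of round $r$ if at least $2f+1$ of $c$'s parents (round $r+w-2$ blocks) are votes for $L$. *)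

From mathcomp Require Import all_boot.
Set Implicit Arguments. Unset Strict Implicit. Unset Printing Implicit Defensive.

Section Dag.
Variables (f : nat) (Block : eqType).
Variables (author : Block -> 'I_(3 * f + 1)) (round : Block -> nat)
          (parents : Block -> seq Block).

Inductive path_to : Block -> Block -> Prop :=
| path_refl x : path_to x x
| path_step x p y : p \in parents x -> path_to p y -> path_to x y.

(* Deterministic depth-first (preorder) search from x along the parent
   lists (in list order), returning the first block satisfying P.
   [fuel] bounds the depth; since parents have strictly smaller rounds,
   fuel = round x explores the whole past of x. *)
Fixpoint dfs_find (fuel : nat) (P : pred Block) (x : Block) : option Block :=
  if P x then Some x else
  match fuel with
  | 0 => None
  | k.+1 => foldr (fun p acc => match dfs_find k P p with
                                | Some y => Some y
                                | None => acc end) None (parents x)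
  end.

Definition vote (v L : Block) : bool :=
  (round L < round v) &&
  (dfs_find (round v)
     (fun y => (author y == author L) && (round y == round L)) v == Some L).

Definition certificate (w : nat) (c L : Block) : bool :=
  (round c == round L + w - 1) &&
  (2 * f + 1 <= size (undup [seq p <- parents c |
                               (round p == round L + w - 2) && vote p L])).

Definition dag_ok (valid : pred Block) (byz : {set 'I_(3 * f + 1)}) : Prop :=
  [/\ #|byz| <= f,
      forall x p, valid x -> p \in parents x -> valid p,
      forall x p, valid x -> p \in parents x -> round p < round x,
      forall x, valid x -> 0 < round x ->
        2 * f + 1 <= size (undup [seq author p |
                             p <- parents x & round p == (round x).-1])
    &
      forall x y, valid x -> valid y -> author x = author y ->
        author x \notin byz -> round x = round y -> x = y].

End Dag.

From mathcomp Require Import all_boot.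
From mathcomp Require Import zify.

Set Implicit Arguments.
Unset Strict Implicit.
Unset Printing Implicit Defensive.

(* Two quorums of 2f+1 validators out of 3f+1 share at least f+1 validators,
   hence an honest one.  So every block of round r+1, whose round-r parents
   have 2f+1 distinct authors, has as a parent the certificate of an honest
   validator that also certified in round r: honest validators make one block
   per round.  A block of a later round reaches round r+1 by following parents
   of the previous round. *)

Lemma quorum_intersection_honest (T : finType) (f : nat) (A B byz : {set T}) :
  #|T| <= 3 * f + 1 -> #|byz| <= f ->
  2 * f + 1 <= #|A| -> 2 * f + 1 <= #|B| ->
  exists a, [/\ a \in A, a \in B & a \notin byz].
Proof.
move=> cardT cardbyz cardA cardB.
have cardUI := cardsUI A B.
have cardU : #|A :|: B| <= #|T| by exact: max_card.
have /subsetPn [a] : ~~ (A :&: B \subset byz).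
  by apply: contraTN isT => /subset_leq_card; lia.
by rewrite inE => /andP [aA aB] anb; exists a.
Qed.

Lemma card_set_uniq (T : finType) (s : seq T) : uniq s -> #|[set a in s]| = size s.
Proof. by move=> us; rewrite cardsE; apply/card_uniqP. Qed.

Section QuorumReachability.

Variables (f : nat) (Block : eqType) (author : Block -> 'I_(3 * f + 1))
  (round : Block -> nat) (parents : Block -> seq Block)
  (valid : pred Block) (byz : {set 'I_(3 * f + 1)}).

Hypothesis dag : dag_ok author round parents valid byz.

Lemma valid_parent_prev_round x : valid x -> 0 < round x ->
  exists2 p, p \in parents x & valid p /\ round p = (round x).-1.
Proof.
case: dag => _ parent_valid _ parents_quorum _ vx rx.
have /hasP [a] : has predT (undup [seq author p | p <- parents x & round p == (round x).-1]).
  by rewrite has_predT; have := parents_quorum x vx rx; lia.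
rewrite mem_undup => /mapP [p]; rewrite mem_filter => /andP [/eqP rp px] _.
by exists p => //; split; first exact: parent_valid px.
Qed.

Variables (C : seq Block) (r : nat).
Hypotheses (C_valid : forall c, c \in C -> valid c /\ round c = r)
  (C_authors_uniq : uniq [seq author c | c <- C])
  (C_quorum : 2 * f + 1 <= size C).

Lemma quorum_in_parents x : valid x -> round x = r.+1 ->
  exists2 c, c \in C & c \in parents x.
Proof.
case: dag => cardbyz parent_valid _ parents_quorum honest_unique vx rx.
set S := undup [seq author p | p <- parents x & round p == (round x).-1].
have cardS : 2 * f + 1 <= #|[set a in S]|.
  by rewrite card_set_uniq ?undup_uniq //; apply: parents_quorum; rewrite ?rx.
have cardC : 2 * f + 1 <= #|[set a in [seq author c | c <- C]]|.
  by rewrite card_set_uniq // size_map.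
have [a [aS aC anb]] :=
  quorum_intersection_honest (eq_leq (card_ord _)) cardbyz cardS cardC.
move: aS; rewrite inE mem_undup => /mapP [p]; rewrite mem_filter.
move=> /andP [/eqP rp px] ap.
move: aC; rewrite inE => /mapP [c cC ac].
have [vc rc] := C_valid cC.
have pc : p = c.
  by apply: honest_unique; [exact: parent_valid px|done|rewrite -ac|rewrite -ap|lia].
by exists c => //; rewrite -pc.
Qed.

Lemma quorum_reachable x : valid x -> r < round x ->
  exists2 c, c \in C & path_to parents x c.
Proof.
suff reach k : forall x, valid x -> round x = r.+1 + k ->
    exists2 c, c \in C & path_to parents x c.
  by move=> vx /subnKC /esym; exact: reach.
elim: k => [|k IH] {}x vx rx.
  have [c cC cx] := quorum_in_parents vx ltac:(lia).
  by exists c; last exact: path_step cx (path_refl _ _).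
have [p px [vp rp]] := valid_parent_prev_round vx ltac:(lia).
have [c cC pc] := IH p vp ltac:(lia).
by exists c; last exact: path_step px pc.
Qed.

End QuorumReachability.

Theorem lemma1 (f : nat) (Block : eqType) (author : Block -> 'I_(3 * f + 1))
  (round : Block -> nat) (parents : Block -> seq Block)
  (valid : pred Block) (byz : {set 'I_(3 * f + 1)}) (w : nat)
  (b : Block) (r : nat) (C : seq Block) :
  dag_ok author round parents valid byz ->
  4 <= w ->
  2 * f + 1 <= size C ->
  uniq [seq author c | c <- C] ->
  (forall c, c \in C ->
     [/\ valid c, round c = r & certificate author round parents w c b]) ->
  forall x, valid x -> r < round x ->
    exists c, [/\ valid c, round c = r,
                  certificate author round parents w c b &
                  path_to parents x c].
Proof.
move=> dag _ C_quorum C_authors_uniq C_certs x vx rx.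
have C_valid c : c \in C -> valid c /\ round c = r.
  by case/C_certs.
have [c cC xc] := quorum_reachable dag C_valid C_authors_uniq C_quorum vx rx.
by have [vc rc cert] := C_certs c cC; exists c.
Qed.
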